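(* In a network satisfying (H1) and (H2), let $V$ be an intermediate species, let $\widetilde Y$ be the enzyme of the connected component containing $V$, and let $Y$ be a non-intermediate species that is the enzyme of some connected component whose set of substrates/products equals $\mathscr{S}_V$. Let $X$ be a non-intermediate species with $X\in\mathscr{S}^{(\alpha)}$ for some $\alpha\ge1$ and $Y,\widetilde Y\notin\mathscr{S}^{(\alpha)}$. If a monomial $y^r v$ ($r\ge0$) appears in $x^{(\ell)}$ for some $\ell\ge1$, then $X\in\mathscr{S}_V$. Moreover, either $V$ reacts to $X$, or $r\ge1$, $\ell\ge2$, and a monomial $y^t v$ with $t<r$ appears in $z_w^{(i)}$ for some $i\le\ell-2$, for a species $Z_w$ involved in a block of reactions $Y+Z_w\rightleftarrows W\to Y+X$ (reactions $Y+Z_w\to W$, $W\to Y+Z_w$, $W\to Y+X$). In the latter case, if $\ell$ is the smallest positive integer such that some monomial $y^{r'}v$ ($r'\ge0$) appears in $x^{(\ell)}$, then $t=r-1$.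
   Context: Species are capital letters, concentrations lower-case letters. Mass-action system: $\dot{\mathbf{x}}=\sum_{y\to y'}k_{yy'}\mathbf{x}^y(y'-y)$, rates $k_{yy'}>0$. Total derivative: $\dot\varphi=\sum_i\frac{\partial\varphi}{\partial x_i}\dot x_i$ with $\dot x_i$ replaced by the right-hand side; $\varphi^{(\ell)}$ the $\ell$-th iterate ($\varphi^{(0)}=\varphi$); a monomial appears if its coefficient (a polynomial in rate constants) is nonzero. (H1) Every connected component has the form $Y+S_0\rightleftarrows U_1\to Y+S_1\rightleftarrows\cdots\rightleftarrows U_L\to Y+S_L$ (reactions $Y+S_{j-1}\to U_j$, $U_j\to Y+S_{j-1}$, $U_j\to Y+S_j$), unique enzyme $Y$; intermediates distinct throughout the network; non-intermediates of a component pairwise distinct but may appear in other components; each complex in a unique component. $\mathscr{S}_U$ = set of substrates/products of the component containing intermediate $U$. (H2) A partition $\mathscr{S}^{(0)}\sqcup\cdots\sqcup\mathscr{S}^{(M)}$ ($M\ge2$, nonempty, $\mathscr{S}^{(0)}$ the intermediates) with: for each intermediate $U$ with enzyme $Y$, some $\alpha\ge1$ has $\mathscr{S}_U\subseteq\mathscr{S}^{(\alpha)}$, $Y\notin\mathscr{S}^{(\alpha)}$. An intermediate $U$ reacts to a non-intermediate $X_1$ if there is a reaction $U\to X_1+X_2$ with $X_2$ non-intermediate. *)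

From HB Require Import structures.
From mathcomp Require Import all_boot all_order all_algebra.
Set Implicit Arguments. Unset Strict Implicit. Unset Printing Implicit Defensive.
Import GRing.Theory.
Local Open Scope ring_scope.

Definition mono (V : finType) := {ffun V -> nat}.
Definition mpoly (V : finType) := seq (int * mono V).

Section MPoly.
Variable V : finType.
Implicit Types (p q : mpoly V) (m : mono V).

Definition coef p m : int := \sum_(t <- p | t.2 == m) t.1.
Definition padd p q : mpoly V := p ++ q.
Definition pmul p q : mpoly V :=
  [seq (a.1 * b.1, [ffun v => (a.2 v + b.2 v)%N]) | a : int * mono V <- p, b : int * mono V <- q].
Definition pvar (v : V) : mpoly V := [:: (1, [ffun w => nat_of_bool (w == v)])].
Definition pderiv (v : V) p : mpoly V :=
  [seq (t.1 * (t.2 v)%:Z, [ffun w => if w == v then (t.2 w).-1 else t.2 w]) | t : int * mono V <- p].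
End MPoly.

Section Network.
Variable S : finType.

Definition cplx := {ffun S -> nat}.
Definition c1 (U : S) : cplx := [ffun Z => nat_of_bool (Z == U)].
Definition c2 (Y X : S) : cplx := [ffun Z => (nat_of_bool (Z == Y) + nat_of_bool (Z == X))%N].
Definition reaction := (cplx * cplx)%type.  (* (source, target) *)

(* A connected component  Y+S_0 <=> U_1 -> Y+S_1 <=> ... <=> U_L -> Y+S_L
   is given by (enzyme Y, [S_0;...;S_L], [U_1;...;U_L]). *)
Definition rcomp := (S * seq S * seq S)%type.
Definition enz (c : rcomp) : S := c.1.1.
Definition subs (c : rcomp) : seq S := c.1.2.
Definition ints (c : rcomp) : seq S := c.2.
Definition sub_ (c : rcomp) (j : nat) : S := nth (enz c) (subs c) j.
Definition int_ (c : rcomp) (j : nat) : S := nth (enz c) (ints c) j.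

Definition comp_reactions (c : rcomp) : seq reaction :=
  flatten [seq [:: (c2 (enz c) (sub_ c j), c1 (int_ c j));
                   (c1 (int_ c j), c2 (enz c) (sub_ c j));
                   (c1 (int_ c j), c2 (enz c) (sub_ c j.+1))]
          | j <- iota 0 (size (ints c))].
Definition comp_complexes (c : rcomp) : seq cplx :=
  [seq c2 (enz c) s | s <- subs c] ++ [seq c1 u | u <- ints c].

Definition network := seq rcomp.
Definition reactions (N : network) : seq reaction := flatten (map comp_reactions N).
Definition intermediates (N : network) : seq S := flatten (map ints N).
Definition is_intermediate (N : network) (U : S) : bool := U \in intermediates N.
Definition species_of (N : network) : seq S :=
  flatten [seq enz c :: subs c ++ ints c | c <- N].

Definition H1 (N : network) : Prop :=
  [/\ (forall c, c \in N -> [/\ 0 < size (ints c), size (subs c) = (size (ints c)).+1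
                                 & uniq (enz c :: subs c)]%N),
      uniq (intermediates N),
      (forall c U, c \in N -> U \in intermediates N -> U \notin enz c :: subs c),
      uniq (flatten (map comp_complexes N))
    &
      (forall s : S, s \in species_of N)].

(* (H2): part s = the index alpha with s in S^(alpha) *)
Definition H2 (N : network) (M : nat) (part : S -> nat) : Prop :=
  [/\ (2 <= M)%N,
      (forall s, part s <= M)%N,
      (forall a, a <= M -> exists s, part s = a)%N,
      (forall s, (part s == 0%N) = is_intermediate N s)
    & (forall c U, c \in N -> U \in ints c ->
         exists a, [/\ (1 <= a)%N, (forall s, s \in subs c -> part s = a) & part (enz c) <> a])].

Definition nreac (N : network) := size (reactions N).
(* variables: concentrations (inl) and rate constants (inr) *)
Definition var (N : network) := (S + 'I_(nreac N))%type.

Definition zero_cplx : cplx := [ffun _ => 0%N].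
Definition reac (N : network) (r : 'I_(nreac N)) : reaction :=
  nth (zero_cplx, zero_cplx) (reactions N) r.

Definition field (N : network) (s : S) : mpoly (var N) :=
  [seq (((reac r).2 s)%:Z - ((reac r).1 s)%:Z,
        [ffun v : var N => match v with
                           | inl s' => (reac r).1 s'
                           | inr j => nat_of_bool (j == r) end])
  | r <- enum 'I_(nreac N)].

Definition tder (N : network) (phi : mpoly (var N)) : mpoly (var N) :=
  flatten [seq pmul (pderiv (inl s) phi) (field N s) | s <- enum S].

(* phi^(l) for phi = the concentration x of species X *)
Definition conc_deriv (N : network) (l : nat) (X : S) : mpoly (var N) :=
  iter l (@tder N) (pvar (inl X : var N)).

(* a monomial m in the concentrations appears in p if its coefficient,
   a polynomial in the rate constants, is nonzero *)
Definition appears (N : network) (m : {ffun S -> nat}) (p : mpoly (var N)) : Prop :=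
  exists mk : {ffun 'I_(nreac N) -> nat},
    coef p [ffun v : var N => match v with inl s => m s | inr j => mk j end] != 0.

Definition mono_yv (Y V : S) (r : nat) : {ffun S -> nat} :=
  [ffun s => (r * nat_of_bool (s == Y) + nat_of_bool (s == V))%N].

Definition reacts_to (N : network) (U X1 : S) : Prop :=
  exists X2, ~~ is_intermediate N X2 /\ (c1 U, c2 X1 X2) \in reactions N.

Definition block (N : network) (Y Z W X : S) : Prop :=
  [/\ (c2 Y Z, c1 W) \in reactions N, (c1 W, c2 Y Z) \in reactions N
    & (c1 W, c2 Y X) \in reactions N].
End Network.

From mathcomp Require Import all_boot all_order all_algebra zify.
Set Implicit Arguments. Unset Strict Implicit. Unset Printing Implicit Defensive.
Import GRing.Theory.

(* Each derivative of a concentration is obtained from the previous one by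
   replacing a variable [x_f] by the monomials [k_r x^(source r)] of the
   reactions [r] changing [f], so a monomial [y^r v] of [x^(l)] can be traced
   back, one reaction at a time, to [x_V].  A source is a single intermediate
   [x_u] or a pair [x_E x_S]; in the latter case Leibniz's rule, together with
   the fact that every monomial of a derivative of positive order contains a
   species other than [Y], forces one factor to be the undifferentiated [y], and
   the trace continues through the other factor with one power of [y] less.
   For [X \in S_V]: the [far] species form a set closed under this backward
   trace and avoiding [V], and by (H2) it contains [X] unless [X \in S_V].
   For the dichotomy: the last reaction of the trace is either a dissociation of
   [V] releasing [X], or a dissociation of another intermediate [W], whose own
   derivatives lead back to its binding pair [Y + Z_w]. *)

Lemma sumr_neq0_exists (R : zmodType) (I : Type) (r : seq I) (F : I -> R) :
  (\sum_(i <- r) F i != 0 -> exists i, F i != 0)%R.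
Proof.
elim: r => [|a r IH]; first by rewrite big_nil eqxx.
rewrite big_cons; case: (eqVneq (F a) 0%R) => [->|h]; last by exists a.
by rewrite add0r.
Qed.

Lemma addr_neq0_or (R : zmodType) (a b : R) : (a + b != 0 -> a != 0 \/ b != 0)%R.
Proof. by case: (eqVneq a 0%R) => [->|]; [rewrite add0r; right|left]. Qed.

Lemma mulf_neq0P (R : idomainType) (a b : R) : (a * b != 0 -> a != 0 /\ b != 0)%R.
Proof. by rewrite mulf_eq0 negb_or => /andP. Qed.

Lemma natr_bool_neq0 (b : bool) : (b%:R : int) != 0%R -> b.
Proof. by case: b. Qed.

Lemma posz_bool_neq0 (b : bool) : Posz b != 0%R -> b.
Proof. by case: b. Qed.

Lemma uniq_flatten_mem_eq (A T : eqType) (f : A -> seq T) (L : seq A) a b x :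
  uniq (flatten (map f L)) -> a \in L -> b \in L -> x \in f a -> x \in f b -> a = b.
Proof.
elim: L => [|c L IH] //=; rewrite cat_uniq => /and3P [_ hd ul].
have inL y : y \in L -> x \in f y -> x \in flatten (map f L).
  by move=> yL xy; apply/flattenP; exists (f y) => //; apply: map_f.
rewrite !inE => /orP [/eqP ->|aL] /orP [/eqP ->|bL] xa xb //.
- by move: hd; rewrite (_ : has _ _ = true) //; apply/hasP; exists x => //; apply: inL xb.
- by move: hd; rewrite (_ : has _ _ = true) //; apply/hasP; exists x => //; apply: inL xa.
- exact: IH.
Qed.

Section Pairing.
Variable V : finType.
Local Open Scope ring_scope.
Implicit Types (p q : mpoly V) (m a b : mono V).

Definition pdot p (G : mono V -> int) : int := \sum_(t <- p) t.1 * G t.2.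

Lemma eq_pdot p G1 G2 : G1 =1 G2 -> pdot p G1 = pdot p G2.
Proof. by move=> h; apply: eq_bigr => t _; rewrite h. Qed.

Lemma pdotD p G1 G2 : pdot p (fun a => G1 a + G2 a) = pdot p G1 + pdot p G2.
Proof. by rewrite /pdot -big_split; apply: eq_bigr => t _; rewrite mulrDr. Qed.

Lemma pdotZ p k G : pdot p (fun a => k * G a) = k * pdot p G.
Proof. by rewrite /pdot big_distrr; apply: eq_bigr => t _; rewrite mulrCA. Qed.

Lemma pdot_sum (I : Type) (r : seq I) p (G : I -> mono V -> int) :
  pdot p (fun a => \sum_(i <- r) G i a) = \sum_(i <- r) pdot p (G i).
Proof.
rewrite /pdot (exchange_big_dep xpredT) //=; apply: eq_bigr => t _.
by rewrite big_distrr.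
Qed.

Lemma exchange_pdot p q (H : mono V -> mono V -> int) :
  pdot p (fun a => pdot q (H a)) = pdot q (fun b => pdot p (H^~ b)).
Proof.
rewrite /pdot; under eq_bigr do rewrite big_distrr.
rewrite exchange_big; apply: eq_bigr => b _; rewrite big_distrr.
by apply: eq_bigr => a _; apply: mulrCA.
Qed.

Lemma pdot_flatten (L : seq (mpoly V)) G :
  pdot (flatten L) G = \sum_(l <- L) pdot l G.
Proof. by rewrite /pdot big_flatten. Qed.

Lemma coef_pdot p m : coef p m = pdot p (fun b => (b == m)%:R).
Proof.
rewrite /coef /pdot big_mkcond; apply: eq_bigr => t _.
by case: (t.2 == m); rewrite ?mulr1 ?mulr0.
Qed.

Lemma pdot_coef_sum p G :
  pdot p G = \sum_(m <- undup (map snd p)) coef p m * G m.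
Proof.
under eq_bigr do rewrite coef_pdot mulrC -pdotZ.
rewrite -pdot_sum; apply: eq_big_seq => t tp; congr (_ * _).
have tD : t.2 \in undup (map snd p) by rewrite mem_undup map_f.
rewrite (bigD1_seq t.2) ?undup_uniq //= eqxx mulr1 big1 ?addr0 // => m.
by rewrite eq_sym => /negbTE ->; rewrite mulr0.
Qed.

Lemma pdot_neq0 p G : pdot p G != 0 -> exists m, coef p m != 0 /\ G m != 0.
Proof.
by rewrite pdot_coef_sum => /sumr_neq0_exists [m /mulf_neq0P]; exists m.
Qed.

Definition mmul a b : mono V := [ffun v => (a v + b v)%N].
Definition mdec (v : V) a : mono V := [ffun w => if w == v then (a w).-1 else a w].

Lemma pdot_pmul p q G :
  pdot (pmul p q) G = pdot p (fun a => pdot q (fun b => G (mmul a b))).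
Proof.
rewrite /pdot /pmul big_flatten /= big_map; apply: eq_bigr => a _.
rewrite big_map big_distrr; apply: eq_bigr => b _ /=.
by rewrite mulrA.
Qed.

Lemma pdot_pderiv v p G :
  pdot (pderiv v p) G = pdot p (fun a => (a v)%:Z * G (mdec v a)).
Proof. by rewrite /pdot /pderiv big_map; apply: eq_bigr => t _ /=; rewrite mulrA. Qed.

Lemma pdot_seq1 k m G : pdot [:: (k, m)] G = k * G m.
Proof. by rewrite /pdot big_seq1. Qed.

Lemma pdot_pvar v G : pdot (pvar v) G = G [ffun w => nat_of_bool (w == v)].
Proof. by rewrite pdot_seq1 mul1r. Qed.
End Pairing.

Section Derivative.
Variables (S : finType) (N : network S).
Local Open Scope ring_scope.
Local Notation VT := (var N).
Local Notation D := (@tder S N).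

(* [tder] acts on pairings through this adjoint operator on weights. *)
Definition tder_dual (G : mono VT -> int) (a : mono VT) : int :=
  \sum_(s <- enum S) (a (inl s))%:Z *
     pdot (field N s) (fun b => G (mmul (mdec (inl s) a) b)).

Lemma pdot_tder p G : pdot (D p) G = pdot p (tder_dual G).
Proof.
rewrite /tder pdot_flatten big_map.
under eq_bigr do rewrite pdot_pmul pdot_pderiv.
by rewrite /tder_dual -pdot_sum.
Qed.

Lemma pdot_iter_tder n p G : pdot (iter n D p) G = pdot p (iter n tder_dual G).
Proof. by elim: n G => [|n IH] G //=; rewrite pdot_tder IH -iterSr. Qed.

Lemma coef_iter_tder n p m :
  coef (iter n D p) m = pdot p (iter n tder_dual (fun b => (b == m)%:R)).
Proof. by rewrite coef_pdot pdot_iter_tder. Qed.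

Lemma mdec_mmul_l (a b c : mono VT) s : (0 < a s)%N ->
  mmul (mdec s (mmul a b)) c = mmul (mmul (mdec s a) c) b.
Proof. by move=> h; apply/ffunP => w; rewrite !ffunE; case: eqP => [->|_]; lia. Qed.

Lemma mdec_mmul_r (a b c : mono VT) s : (0 < b s)%N ->
  mmul (mdec s (mmul a b)) c = mmul a (mmul (mdec s b) c).
Proof. by move=> h; apply/ffunP => w; rewrite !ffunE; case: eqP => [->|_]; lia. Qed.

Lemma pdot_tder_pmul p q G :
  pdot (D (pmul p q)) G = pdot (pmul (D p) q) G + pdot (pmul p (D q)) G.
Proof.
rewrite pdot_tder !pdot_pmul pdot_tder.
under [X in _ = _ + X]eq_pdot do rewrite pdot_tder.
rewrite -pdotD; apply: eq_pdot => a.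
rewrite /tder_dual pdot_sum.
under [X in _ = _ + X]eq_pdot do rewrite /tder_dual.
rewrite pdot_sum -big_split; apply: eq_bigr => s _ /=.
rewrite exchange_pdot -pdotZ -pdotD; apply: eq_pdot => b.
rewrite -!pdotZ -pdotD; apply: eq_pdot => c.
rewrite ffunE PoszD mulrDl; congr (_ + _).
  case: (posnP (a (inl s))) => [->|h]; first by rewrite !mul0r.
  by rewrite mdec_mmul_l.
case: (posnP (b (inl s))) => [->|h]; first by rewrite !mul0r.
by rewrite mdec_mmul_r.
Qed.

(* Leibniz's rule, read on monomials. *)
Lemma coef_iter_tder_pmulP n p q m : coef (iter n D (pmul p q)) m != 0 ->
  exists i j m1 m2, [/\ (i + j)%N = n, m = mmul m1 m2,
     coef (iter i D p) m1 != 0 & coef (iter j D q) m2 != 0].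
Proof.
elim: n p q m => [|n IH] p q m.
  rewrite /= coef_pdot pdot_pmul => /pdot_neq0 [a [ha /pdot_neq0 [b [hb hab]]]].
  by exists 0%N, 0%N, a, b; split => //; move/natr_bool_neq0/eqP: hab.
rewrite iterSr coef_iter_tder pdot_tder_pmul -!coef_iter_tder.
move/addr_neq0_or => [/IH|/IH] [i [j [m1 [m2 [<- e2 h1 h2]]]]].
  by exists i.+1, j, m1, m2; rewrite iterSr.
by exists i, j.+1, m1, m2; rewrite addnS iterSr.
Qed.

Definition rate_mono (r : 'I_(nreac N)) : mono VT :=
  [ffun v : VT => match v with inl s => (reac r).1 s | inr j => nat_of_bool (j == r) end].

Lemma pdot_field s G : pdot (field N s) G =
  \sum_(r <- enum 'I_(nreac N)) (((reac r).2 s)%:Z - ((reac r).1 s)%:Z) * G (rate_mono r).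
Proof. by rewrite /pdot big_map. Qed.

Lemma coef_tder_neq0 p m : coef (D p) m != 0 ->
  exists a s r, coef p a != 0 /\ m = mmul (mdec (inl s) a) (rate_mono r).
Proof.
rewrite coef_pdot pdot_tder => /pdot_neq0 [a [ha]].
rewrite /tder_dual => /sumr_neq0_exists [s /mulf_neq0P [_]].
rewrite pdot_field => /sumr_neq0_exists [r /mulf_neq0P [_]].
by move/natr_bool_neq0/eqP => <-; exists a, s, r.
Qed.

(* The first derivative of [x_f] is the sum of the [k_r x^(source r)] over
   the reactions [r] that change [f]. *)
Lemma coef_iter_tder_pvar n f m : coef (iter n.+1 D (pvar (inl f : VT))) m != 0 ->
  exists r, (reac r).2 f != (reac r).1 f /\
     coef (iter n D [:: (1, rate_mono r)]) m != 0.
Proof.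
rewrite coef_iter_tder pdot_pvar /= {1}/tder_dual => /sumr_neq0_exists [s].
move=> /mulf_neq0P []; rewrite ffunE => /posz_bool_neq0/eqP [->].
rewrite pdot_field => /sumr_neq0_exists [r /mulf_neq0P [hr h]].
exists r; split; first by apply: contra hr => /eqP ->; rewrite subrr.
rewrite coef_iter_tder pdot_seq1 mul1r.
suff -> : rate_mono r =
  mmul (mdec (inl f) [ffun w => nat_of_bool (w == inl f)]) (rate_mono r) by [].
by apply/ffunP => w; rewrite !ffunE; case: eqP.
Qed.

Definition rate_poly (r : 'I_(nreac N)) : mpoly VT :=
  [:: (1, [ffun v : VT => match v with inl _ => 0%N | inr j => nat_of_bool (j == r) end])].

Lemma rate_mono_c1 r u : (reac r).1 = c1 u ->
  [:: (1, rate_mono r)] = pmul (pvar (inl u : VT)) (rate_poly r).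
Proof.
move=> e; congr [:: (_, _)].
by apply/ffunP => -[s|j]; rewrite !ffunE /= ?e ?ffunE ?addn0.
Qed.

Lemma rate_mono_c2 r a b : (reac r).1 = c2 a b ->
  [:: (1, rate_mono r)] = pmul (pmul (pvar (inl a : VT)) (pvar (inl b : VT))) (rate_poly r).
Proof.
move=> e; congr [:: (_, _)].
by apply/ffunP => -[s|j]; rewrite !ffunE /= ?e ?ffunE ?addn0.
Qed.

Lemma coef_tder_rate_poly n r m : coef (iter n.+1 D (rate_poly r)) m = 0.
Proof.
rewrite coef_iter_tder pdot_seq1 /= /tder_dual big1 ?mulr0 // => s _.
by rewrite ffunE mul0r.
Qed.
End Derivative.

Section Occurrence.
Variables (S : finType) (N : network S).
Local Open Scope ring_scope.
Local Notation VT := (var N).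
Local Notation D := (@tder S N).
Local Notation cvar f := (pvar (inl f : VT)).

Definition conc_part (m : mono VT) : {ffun S -> nat} := [ffun s => m (inl s)].

(* [appears] with the rate-constant exponents folded into a single monomial. *)
Definition occurs (m : {ffun S -> nat}) (p : mpoly VT) : Prop :=
  exists2 a, conc_part a = m & coef p a != 0.

Lemma appears_occurs m p : appears m p <-> occurs m p.
Proof.
split=> [[mk h]|[a <- h]].
  by eexists; last exact: h; apply/ffunP => s; rewrite !ffunE.
exists [ffun j => a (inr j)]; congr (coef _ _ != 0): h.
by apply/ffunP => -[s|j]; rewrite !ffunE.
Qed.

Definition addm (m1 m2 : {ffun S -> nat}) : {ffun S -> nat} := [ffun s => (m1 s + m2 s)%N].

Lemma occurs_iter_tder_pmul n p q m : occurs m (iter n D (pmul p q)) ->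
  exists i j m1 m2, [/\ (i + j)%N = n, m = addm m1 m2,
     occurs m1 (iter i D p) & occurs m2 (iter j D q)].
Proof.
move=> [a <- /coef_iter_tder_pmulP [i [j [a1 [a2 [e -> h1 h2]]]]]].
exists i, j, (conc_part a1), (conc_part a2); split => //; try by eexists.
by apply/ffunP => s; rewrite !ffunE.
Qed.

(* Rate constants are constant, so a factor [k_r] passes through all derivatives. *)
Lemma occurs_iter_tder_rate n p r m : occurs m (iter n D (pmul p (rate_poly r))) ->
  occurs m (iter n D p).
Proof.
move=> /occurs_iter_tder_pmul [i [[|j] [m1 [m2 [e -> h1 [a e2 h2]]]]]]; last first.
  by rewrite coef_tder_rate_poly eqxx in h2.
move: h2; rewrite /= coef_pdot pdot_seq1 mul1r => /natr_bool_neq0/eqP ea.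
move: h1; rewrite -e addn0; congr (occurs _ _).
by apply/ffunP => s; rewrite !ffunE -e2 -ea !ffunE addn0.
Qed.

Lemma occurs_pvar u m : occurs m (cvar u) -> m = c1 u.
Proof.
move=> [a <-]; rewrite coef_pdot pdot_pvar => /natr_bool_neq0/eqP <-.
by apply/ffunP => s; rewrite !ffunE.
Qed.

Lemma occurs_tder p m : occurs m (D p) ->
  exists a s (r : 'I_(nreac N)), coef p a != 0 /\
    m = addm (conc_part (mdec (inl s) a)) (reac r).1.
Proof.
move=> [b <- /coef_tder_neq0 [a [s [r [ha ->]]]]].
by exists a, s, r; split => //; apply/ffunP => t; rewrite !ffunE.
Qed.

Lemma occurs_iter_tder_pvar n f m : occurs m (iter n.+1 D (cvar f)) ->
  exists r : 'I_(nreac N), [/\ (reac r).2 f != (reac r).1 f,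
     forall u, (reac r).1 = c1 u -> occurs m (iter n D (cvar u))
   & forall a b, (reac r).1 = c2 a b -> occurs m (iter n D (pmul (cvar a) (cvar b)))].
Proof.
move=> [a ea /coef_iter_tder_pvar [r [hr h]]]; exists r; split => //.
  by move=> u e; apply: (@occurs_iter_tder_rate _ _ r); exists a; rewrite -?rate_mono_c1.
by move=> u v e; apply: (@occurs_iter_tder_rate _ _ r); exists a; rewrite -?rate_mono_c2.
Qed.
End Occurrence.

Section Structure.
Variables (S : finType) (N : network S).
Hypothesis hH1 : H1 N.
Implicit Types (c : rcomp S) (u a b s f : S).

Lemma c1E u s : c1 u s = nat_of_bool (s == u). Proof. by rewrite ffunE. Qed.

Lemma c2E a b s : c2 a b s = (nat_of_bool (s == a) + nat_of_bool (s == b))%N.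
Proof. by rewrite ffunE. Qed.

Lemma c2C a b : c2 a b = c2 b a.
Proof. by apply/ffunP => s; rewrite !c2E addnC. Qed.

Lemma net_changeP u a b f : c1 u f != c2 a b f -> [\/ f = u, f = a | f = b].
Proof.
rewrite c1E c2E; case: (eqVneq f u) => [->|_]; first by constructor 1.
case: (eqVneq f a) => [->|_]; first by constructor 2.
by case: (eqVneq f b) => [->|_]; first by constructor 3.
Qed.

Lemma intermediate_neq u s : is_intermediate N u -> ~~ is_intermediate N s -> u != s.
Proof. by move=> hu; apply: contraNneq => <-. Qed.

Lemma ints_intermediate c u : c \in N -> u \in ints c -> is_intermediate N u.
Proof. by move=> cN h; apply/flattenP; exists (ints c) => //; apply: map_f. Qed.

Lemma ints_comp c c' u : c \in N -> c' \in N -> u \in ints c -> u \in ints c' -> c = c'.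
Proof. by case: hH1 => _ uI _ _ _; apply: uniq_flatten_mem_eq uI. Qed.

Lemma enz_nonint c : c \in N -> ~~ is_intermediate N (enz c).
Proof.
case: hH1 => _ _ hI _ _ cN; apply/negP => /(hI c _ cN).
by rewrite inE eqxx.
Qed.

Lemma subs_nonint c s : c \in N -> s \in subs c -> ~~ is_intermediate N s.
Proof.
case: hH1 => _ _ hI _ _ cN sc; apply/negP => /(hI c _ cN).
by rewrite inE sc orbT.
Qed.

Lemma enz_neq_subs c s : c \in N -> s \in subs c -> enz c != s.
Proof.
case: hH1 => hc _ _ _ _ cN sc; case: (hc c cN) => _ _ /= /andP [nin _].
by apply: contraNneq nin => ->.
Qed.

Lemma enz_subs_comp c c' s s' : c \in N -> c' \in N -> s \in subs c -> s' \in subs c' ->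
  c2 (enz c) s = c2 (enz c') s' -> c = c'.
Proof.
case: hH1 => _ _ _ uC _ cN cN' sc sc' e.
apply: (uniq_flatten_mem_eq uC cN cN' (x := c2 (enz c) s)); last rewrite e;
  by rewrite mem_cat; apply/orP; left; apply: map_f.
Qed.

Lemma reactionP rho : rho \in reactions N -> exists c u s, [/\ c \in N, u \in ints c, s \in subs c &
  (rho = (c2 (enz c) s, c1 u) /\ (c1 u, c2 (enz c) s) \in reactions N) \/
   rho = (c1 u, c2 (enz c) s)].
Proof.
move/flattenP => [rs /mapP [c cN ->]] /flattenP [l /mapP [j jI el] hrho].
move: jI; rewrite mem_iota add0n => /andP [_ jl].
have inR rho' : rho' \in l -> rho' \in reactions N.
  move=> h; apply/flattenP; exists (comp_reactions c); first exact: map_f.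
  by apply/flattenP; exists l => //; apply/mapP; exists j; rewrite ?mem_iota ?add0n.
have uc : int_ c j \in ints c by rewrite mem_nth.
have sub_mem k : (k <= size (ints c))%N -> sub_ c k \in subs c.
  by case: hH1 => hc _ _ _ _ kl; case: (hc c cN) => _ hs _; rewrite mem_nth // hs.
move: hrho; rewrite el !inE => /or3P [/eqP ->|/eqP ->|/eqP ->].
- exists c, (int_ c j), (sub_ c j); split; rewrite ?sub_mem 1?ltnW //; left; split => //.
  by apply: inR; rewrite el !inE eqxx orbT.
- by exists c, (int_ c j), (sub_ c j); split; rewrite ?sub_mem 1?ltnW //; right.
- by exists c, (int_ c j), (sub_ c j.+1); split; rewrite ?sub_mem //; right.
Qed.

Lemma reac_in (r : 'I_(nreac N)) : reac r \in reactions N.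
Proof. by rewrite /reac mem_nth. Qed.

Lemma net_change_nonint c u s f : c \in N -> u \in ints c -> ~~ is_intermediate N f ->
  c1 u f != c2 (enz c) s f -> f = enz c \/ f = s.
Proof.
move=> cN uc fn /net_changeP [fu|->|->]; [|by left|by right].
by move: fn; rewrite fu (ints_intermediate cN uc).
Qed.

Lemma net_change_int c u s f : c \in N -> s \in subs c -> is_intermediate N f ->
  c1 u f != c2 (enz c) s f -> f = u.
Proof.
move=> cN sc fi /net_changeP [//|fe|fs].
  by move: (enz_nonint cN); rewrite -fe fi.
by move: (subs_nonint cN sc); rewrite -fs fi.
Qed.

Lemma source_nonY Y rho : ~~ is_intermediate N Y -> rho \in reactions N ->
  exists2 s, s != Y & (0 < rho.1 s)%N.
Proof.
move=> hY /reactionP [c [u [s [cN uc sc [[-> _]|->]]]]] /=.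
  case: (eqVneq (enz c) Y) => [eY|eY]; last by exists (enz c); rewrite // c2E eqxx.
  by exists s; rewrite ?c2E ?eqxx ?addn1 // -eY eq_sym enz_neq_subs.
by exists u; rewrite ?c1E ?eqxx // (intermediate_neq (ints_intermediate cN uc)).
Qed.
End Structure.

Section Partition.
Variables (S : finType) (N : network S) (M : nat) (part : S -> nat).
Hypotheses (hH1 : H1 N) (hH2 : H2 N M part).
Implicit Types (c : rcomp S) (s : S).

Lemma part_subs c : c \in N ->
  exists k, (forall s, s \in subs c -> part s = k) /\ part (enz c) <> k.
Proof.
case: hH2 => _ _ _ _ hc cN; case: hH1 => hs _ _ _ _; case: (hs c cN) => ints0 _ _.
by case: (hc c (nth (enz c) (ints c) 0) cN (mem_nth _ ints0)) => k [_ ]; exists k.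
Qed.

Lemma eq_part_subs c s s' : c \in N -> s \in subs c -> s' \in subs c -> part s = part s'.
Proof. by move=> cN sc sc'; case: (part_subs cN) => k [pk _]; rewrite !pk. Qed.
End Partition.

Section MonoYV.
Variables (S : finType) (Y V : S).
Hypothesis VY : V != Y.
Implicit Types (m : {ffun S -> nat}) (u : S).
Local Notation yv := (mono_yv Y V).

Lemma yv_c1 r u : yv r = c1 u -> u = V.
Proof.
move/(congr1 (fun m => m V)); rewrite !ffunE eqxx (negbTE VY) muln0 /=.
by case: eqP.
Qed.

Lemma yv_addm_c1Y r m : yv r = addm (c1 Y) m -> (0 < r)%N /\ m = yv r.-1.
Proof.
move=> e; have := congr1 (fun m => m Y) e.
rewrite !ffunE eqxx eq_sym (negbTE VY) /= => eY.
have rp : (0 < r)%N by lia.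
split => //; apply/ffunP => s; have := congr1 (fun m => m s) e; rewrite !ffunE.
by case: (s == Y); case: (s == V) => /=; lia.
Qed.

(* [1] on [y^r v], positive on every monomial of a derivative of positive order. *)
Definition deg_nonY m := (\sum_(s | s != Y) m s)%N.

Lemma deg_nonY_addm m1 m2 : deg_nonY (addm m1 m2) = (deg_nonY m1 + deg_nonY m2)%N.
Proof. by rewrite /deg_nonY -big_split; apply: eq_bigr => s _; rewrite ffunE. Qed.

Lemma leq_deg_nonY u m : u != Y -> (m u <= deg_nonY m)%N.
Proof. by move=> uY; rewrite /deg_nonY (bigD1 u) //= leq_addr. Qed.

Lemma deg_nonY_yv r : deg_nonY (yv r) = 1%N.
Proof.
rewrite /deg_nonY (bigD1 V) ?VY //= ffunE eqxx (negbTE VY) muln0 add0n.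
by rewrite big1 // => s /andP [sY sV]; rewrite ffunE (negbTE sY) (negbTE sV) muln0.
Qed.
End MonoYV.

Section Descent.
Variables (S : finType) (N : network S) (M : nat) (part : S -> nat).
Hypotheses (hH1 : H1 N) (hH2 : H2 N M part).
Variables (c0 cY : rcomp S) (V Y X : S) (alpha : nat).
Hypotheses (hc0 : c0 \in N) (hV : V \in ints c0) (hYni : ~~ is_intermediate N Y)
  (hcY : cY \in N) (hcYe : enz cY = Y) (hcYs : subs cY =i subs c0)
  (hXni : ~~ is_intermediate N X) (hX : part X = alpha) (hYa : part Y <> alpha)
  (hYta : part (enz c0) <> alpha).
Implicit Types (c : rcomp S) (u s f : S) (m : {ffun S -> nat}).
Local Notation D := (@tder S N).
Local Notation cvar f := (pvar (inl f : var N)).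
Local Notation yv := (mono_yv Y V).

Lemma V_intermediate : is_intermediate N V.
Proof. exact: ints_intermediate hc0 hV. Qed.

Lemma V_neq_Y : V != Y.
Proof. exact: intermediate_neq V_intermediate hYni. Qed.

Lemma X_neq_Y : X != Y.
Proof. by apply: contra_not_neq hYa => <-. Qed.

Lemma deg_nonY_iter_tder i Z m : occurs m (iter i D (cvar Z)) ->
  [/\ Z = Y, i = 0%N & m = c1 Y] \/ (0 < deg_nonY Y m)%N.
Proof.
case: i => [/occurs_pvar ->|n /occurs_tder [a [s [r [_ ->]]]]].
  case: (eqVneq Z Y) => [->|ZY]; first by left.
  by right; apply: leq_trans (leq_deg_nonY _ ZY); rewrite c1E eqxx.
right; rewrite deg_nonY_addm; apply: leq_trans (leq_addl _ _).
have [s' s'Y s'r] := source_nonY hH1 hYni (reac_in r).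
exact: leq_trans s'r (leq_deg_nonY _ s'Y).
Qed.

Lemma occurs_yv_pair n a b r : occurs (yv r) (iter n D (pmul (cvar a) (cvar b))) ->
  (0 < r)%N /\ ((a = Y /\ occurs (yv r.-1) (iter n D (cvar b))) \/
                (b = Y /\ occurs (yv r.-1) (iter n D (cvar a)))).
Proof.
move/occurs_iter_tder_pmul => [i [j [m1 [m2 [eij em h1 h2]]]]].
have := deg_nonY_yv V_neq_Y r; rewrite em deg_nonY_addm.
case: (deg_nonY_iter_tder h1) => [[-> i0 m1e]|p1];
  case: (deg_nonY_iter_tder h2) => [[-> j0 m2e]|p2].
- by rewrite m1e m2e /deg_nonY big1 // => s sY; rewrite c1E (negbTE sY).
- move: eij em; rewrite i0 m1e => <- /(yv_addm_c1Y V_neq_Y) [rp e2] _.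
  by split => //; left; split => //; rewrite -e2.
- move: eij em; rewrite j0 m2e addn0 => <- em _.
  have [rp e1] : (0 < r)%N /\ m1 = yv r.-1.
    by apply: (yv_addm_c1Y V_neq_Y); rewrite em; apply/ffunP => s; rewrite !ffunE addnC.
  by split => //; right; split => //; rewrite -e1.
- by move=> e; move: (leq_add p1 p2); rewrite e.
Qed.

(* [far] is preserved when a monomial [y^r v] is traced back through a
   reaction, and [V] is not [far]. *)
Definition alpha_linked g := (~~ is_intermediate N g /\ part g = alpha) \/
  exists c, [/\ c \in N, g \in ints c &
     part (enz c) = alpha \/ exists2 s, s \in subs c & part s = alpha].
Definition V_linked g := [\/ g = V, g \in subs c0 | g \in ints cY].
Definition far g := [/\ g != Y, alpha_linked g & ~ V_linked g].

Lemma alpha_linked_nonint g : ~~ is_intermediate N g -> alpha_linked g -> part g = alpha.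
Proof. by move=> ni [[_ //]|[c [cN gc _]]]; move: ni; rewrite (ints_intermediate cN gc). Qed.

Lemma alpha_linked_ints c u : c \in N -> u \in ints c -> alpha_linked u ->
  part (enz c) = alpha \/ exists2 s, s \in subs c & part s = alpha.
Proof.
move=> cN uc [[ni _]|[c' [cN' uc' h]]]; first by move: ni; rewrite (ints_intermediate cN uc).
by rewrite (ints_comp hH1 cN cN' uc uc').
Qed.

Lemma far_binding c u s f : c \in N -> u \in ints c -> s \in subs c ->
  c1 u f != c2 (enz c) s f -> far f ->
  (enz c = Y -> far s) /\ (s = Y -> far (enz c)).
Proof.
move=> cN uc sc net [fY af nf].
have En := enz_nonint hH1 cN; have Sn := subs_nonint hH1 cN sc.
have ES := enz_neq_subs hH1 cN sc.
case/net_changeP: net => [fu|fe|fs]; subst f; last 2 first.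
- by split=> hY; [move: fY; rewrite hY eqxx|].
- by split=> hY; [|move: fY; rewrite hY eqxx].
split=> hY.
- split; first by rewrite -hY eq_sym.
    left; split => //; case: (alpha_linked_ints cN uc af) => [pe|[s' s'c ps']].
      by case: hYa; rewrite -hY.
    by rewrite (eq_part_subs hH1 hH2 cN sc s'c).
  case=> [eV|e0|eI]; first by move: Sn; rewrite eV V_intermediate.
    have ccY : c = cY by apply: (enz_subs_comp hH1 cN hcY sc (s' := s)); rewrite ?hcYs // hY hcYe.
    by apply: nf; constructor 3; rewrite -ccY.
  by move: Sn; rewrite (ints_intermediate hcY eI).
- split; first by rewrite -hY.
    left; split => //; case: (alpha_linked_ints cN uc af) => [//|[s' s'c ps']].
    by case: hYa; rewrite -hY (eq_part_subs hH1 hH2 cN sc s'c).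
  case=> [eV|e0|eI]; first by move: En; rewrite eV V_intermediate.
    have ccY : c = cY.
      by apply: (enz_subs_comp hH1 cN hcY sc (s' := enz c)); rewrite ?hcYs // hY c2C hcYe.
    by move: ES; rewrite hY ccY hcYe eqxx.
  by move: En; rewrite (ints_intermediate hcY eI).
Qed.

Lemma far_dissociation c u s f : c \in N -> u \in ints c -> s \in subs c ->
  c2 (enz c) s f != c1 u f -> far f -> far u.
Proof.
move=> cN uc sc; rewrite eq_sym => net [fY af nf].
have Ui := ints_intermediate cN uc.
have uY := intermediate_neq Ui hYni.
case/net_changeP: net => [<- //|fe|fs].
- have pe : part (enz c) = alpha.
    by rewrite -fe (alpha_linked_nonint _ af) // fe enz_nonint.
  split => //; first by right; exists c; split => //; left.
  case=> [uV|u0|uI].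
  + by case: hYta; rewrite -(ints_comp hH1 cN hc0 uc) // uV.
  + by move: (subs_nonint hH1 hc0 u0); rewrite Ui.
  + by move: fY; rewrite fe (ints_comp hH1 cN hcY uc uI) hcYe eqxx.
- have ps : part s = alpha.
    by rewrite -fs (alpha_linked_nonint _ af) // fs (subs_nonint hH1 cN sc).
  split => //; first by right; exists c; split => //; right; exists s.
  case=> [uV|u0|uI].
  + by apply: nf; constructor 2; rewrite fs -(ints_comp hH1 cN hc0 uc) // uV.
  + by move: (subs_nonint hH1 hc0 u0); rewrite Ui.
  + by apply: nf; constructor 2; rewrite fs -hcYs -(ints_comp hH1 cN hcY uc uI).
Qed.

Lemma far_not_occurs n r f : far f -> ~ occurs (yv r) (iter n D (cvar f)).
Proof.
elim: n r f => [|n IH] r f ff.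
  by move/occurs_pvar/(yv_c1 V_neq_Y) => fV; case: ff => _ _; apply; constructor 1.
case/occurs_iter_tder_pvar => r0 [net hu hab].
case: (reactionP hH1 (reac_in r0)) => c [u [s [cN uc sc [[e _]|e]]]]; rewrite e /= in net hu hab.
  have [fs fe] := far_binding cN uc sc net ff.
  by case/occurs_yv_pair: (hab _ _ erefl) => _ [[/fs fg]|[/fe fg]]; apply: IH fg.
exact: IH (far_dissociation cN uc sc net ff) (hu _ erefl).
Qed.

Lemma mem_subs_of_occurs l r : occurs (yv r) (iter l D (cvar X)) -> X \in subs c0.
Proof.
apply: contraPT => nX; apply: far_not_occurs; split; rewrite ?X_neq_Y //; first by left.
case=> [xV|x0|xI]; first by move: hXni; rewrite xV V_intermediate.
  by rewrite x0 in nX.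
by move: hXni; rewrite (ints_intermediate hcY xI).
Qed.

Lemma occurs_iter_tder_ints n r c u : c \in N -> u \in ints c -> u != V ->
  occurs (yv r) (iter n D (cvar u)) ->
  exists n' s, [/\ (n' < n)%N, s \in subs c, (c2 (enz c) s, c1 u) \in reactions N,
    (c1 u, c2 (enz c) s) \in reactions N &
    occurs (yv r) (iter n' D (pmul (cvar (enz c)) (cvar s)))].
Proof.
move=> cN uc uV; have Ui := ints_intermediate cN uc.
elim: n => [/occurs_pvar/(yv_c1 V_neq_Y) uV'|n IH]; first by rewrite uV' eqxx in uV.
case/occurs_iter_tder_pvar => r0 [net hu hab].
case: (reactionP hH1 (reac_in r0)) => c' [u' [s [cN' uc' sc [[e rev]|e]]]];
  rewrite e /= in net hu hab.
  have eu := net_change_int hH1 cN' sc Ui net; subst u'.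
  have cc := ints_comp hH1 cN cN' uc uc'; subst c'.
  by exists n, s; split => //; [rewrite -e; apply: reac_in | apply: hab].
rewrite eq_sym in net; have eu := net_change_int hH1 cN' sc Ui net; subst u'.
have [n' [s' [n'n s'c hb hub h]]] := IH (hu _ erefl).
by exists n', s'; split => //; apply: ltnW.
Qed.

Definition second_claim l r : Prop :=
  reacts_to N V X \/
  [/\ (1 <= r)%N, (2 <= l)%N &
    exists t i Zw W,
      [/\ (t < r)%N, (i <= l - 2)%N, block N Y Zw W X,
          appears (yv t) (conc_deriv N i Zw)
        & ((forall l' r', (1 <= l')%N -> (l' < l)%N ->
              ~ appears (yv r') (conc_deriv N l' X)) -> t = r.-1)]].

(* A factor [y] split off at an earlier order [n] is inherited by [x^(l)];
   minimality of [l] then fails, so the last clause holds vacuously. *)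
Lemma second_claim_of_lower l r n :
  (forall n', (n' < l)%N -> forall r', (1 <= n')%N ->
     occurs (yv r') (iter n' D (cvar X)) -> second_claim n' r') ->
  (n < l)%N -> (0 < r)%N -> occurs (yv r.-1) (iter n D (cvar X)) -> second_claim l r.
Proof.
move=> IH nl rp h; case: n => [|n] in nl h.
  by move: hXni; rewrite (yv_c1 V_neq_Y (occurs_pvar h)) V_intermediate.
case: (IH n.+1 nl r.-1 erefl h) => [|[_ _ [t [i [Zw [W [ht hi hb ha _]]]]]]]; first by left.
right; split => //; first by clear -nl; lia.
exists t, i, Zw, W; split => //; [clear -ht; lia | clear -hi nl; lia |].
by move=> hmin; case: (hmin n.+1 r.-1 erefl nl); apply/appears_occurs.
Qed.

Lemma second_claim_dissociation n r c u s :
  (forall n', (n' < n.+1)%N -> forall r', (1 <= n')%N ->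
     occurs (yv r') (iter n' D (cvar X)) -> second_claim n' r') ->
  c \in N -> u \in ints c -> s \in subs c -> (c1 u, c2 (enz c) s) \in reactions N ->
  X = enz c \/ X = s -> occurs (yv r) (iter n D (cvar u)) -> second_claim n.+1 r.
Proof.
move=> IH cN uc sc hr hXcs h.
case: (eqVneq u V) => [uV|uV].
  left; case: hXcs => ->.
    by exists s; rewrite -uV (subs_nonint hH1 cN sc).
  by exists (enz c); rewrite c2C -uV (enz_nonint hH1 cN).
have [n' [s' [n'n s'c hb hub h']]] := occurs_iter_tder_ints cN uc uV h.
case/occurs_yv_pair: h' => rp [[eY hs]|[sY he]].
  have xs : X = s by case: hXcs => // xe; case/eqP: X_neq_Y; rewrite xe.
  right; split => //; first by clear -n'n; lia.
  exists r.-1, n', s', u; split => //; [clear -rp; lia | clear -n'n; lia | | by apply/appears_occurs].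
  by rewrite /block -eY xs.
have xe : X = enz c.
  by case: hXcs => // xs; case: hYa; rewrite -sY -hX xs (eq_part_subs hH1 hH2 cN sc s'c).
by apply: (second_claim_of_lower IH (ltnW n'n) rp); rewrite xe.
Qed.

Lemma second_claim_holds l r : (1 <= l)%N -> occurs (yv r) (iter l D (cvar X)) ->
  second_claim l r.
Proof.
elim/ltn_ind: l r => -[//|n] IH r _.
case/occurs_iter_tder_pvar => r0 [net hu hab].
case: (reactionP hH1 (reac_in r0)) => c [u [s [cN uc sc [[e _]|e]]]];
  rewrite e /= in net hu hab.
  case: (net_change_nonint cN uc hXni net) => xcs;
    case/occurs_yv_pair: (hab _ _ erefl) => rp [[eY h]|[sY h]];
    try by case/eqP: X_neq_Y; rewrite xcs.
  - by apply: (second_claim_of_lower IH (ltnSn n) rp); rewrite xcs.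
  - by apply: (second_claim_of_lower IH (ltnSn n) rp); rewrite xcs.
rewrite eq_sym in net.
apply: (second_claim_dissociation IH cN uc sc _ _ (hu _ erefl)).
  by rewrite -e reac_in.
exact: net_change_nonint cN uc hXni net.
Qed.
End Descent.

Theorem mainTheorem13 (S : finType) (N : network S) (M : nat) (part : S -> nat)
  (hH1 : H1 N) (hH2 : H2 N M part)
  (c0 : rcomp S) (V : S) (hc0 : c0 \in N) (hV : V \in ints c0)
  (Y : S) (hYni : ~~ is_intermediate N Y)
  (hY : exists2 c1 : rcomp S, c1 \in N & enz c1 = Y /\ subs c1 =i subs c0)
  (X : S) (hXni : ~~ is_intermediate N X) (alpha : nat) (halpha : (1 <= alpha)%N)
  (hX : part X = alpha) (hYa : part Y <> alpha) (hYta : part (enz c0) <> alpha)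
  (r l : nat) (hl : (1 <= l)%N) (happ : appears (mono_yv Y V r) (conc_deriv N l X)) :
  X \in subs c0 /\
  (reacts_to N V X \/
   [/\ (1 <= r)%N, (2 <= l)%N &
    exists t i Zw W,
      [/\ (t < r)%N, (i <= l - 2)%N, block N Y Zw W X,
          appears (mono_yv Y V t) (conc_deriv N i Zw)
        & ((forall l' r', (1 <= l')%N -> (l' < l)%N ->
              ~ appears (mono_yv Y V r') (conc_deriv N l' X)) -> t = r.-1)]]).
Proof.
case: hY => cY hcY [hcYe hcYs]; move/appears_occurs: happ => happ.
split; first exact: (mem_subs_of_occurs hH1 hH2 hc0 hV hYni hcY hcYe hcYs hXni hX hYa hYta happ).
exact: (second_claim_holds hH1 hH2 hc0 hV hYni hXni hX hYa hl happ).
Qed.
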